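(* Let $\Gamma$ be a weighted digraph with vertex set $\{1,\dots,n\}$, $n>1$, without loops and with strictly positive arc weights, with Laplacian matrix $L$, in-forest dimension $d$, and let $\tilde J=J_{n-d}=\sigma_{n-d}^{-1}Q_{n-d}$. Then: (i) $L\tilde J=\tilde JL=LQ_{n-d}=Q_{n-d}L=0$; (ii) $\tilde JJ_k=J_k\tilde J=\tilde J$ for $k=0,\dots,n-d$; (iii) $\tilde J^2=\tilde J$; (iv) $\operatorname{rank}\tilde J=\mu_1(\tilde J)=\operatorname{tr}\tilde J=d$ and $\mu_0(\tilde J)=n-d$.
   Context: $W=(w_{ij})$ is the matrix of arc weights ($w_{ij}>0$ iff there is an arc $i\to j$, else $0$). The Laplacian $L=(\ell_{ij})$: $\ell_{ij}=-w_{ij}$ for $j\ne i$, $\ell_{ii}=\sum_{k\ne i}w_{ik}$. The weight of a subgraph is the product of its arc weights (1 if no arcs); the weight of a set of subgraphs is the sum of their weights. A converging tree is a weakly connected digraph with one vertex (the root) of outdegree 0 and all others of outdegree 1; an in-forest is a spanning subgraph of $\Gamma$ whose weak components are converging trees. The in-forest dimension $d$ is the minimal number of trees in an in-forest (so in-forests have at most $n-d$ arcs). $\sigma_k$ is the total weight of in-forests with $k$ arcs; $Q_k=(q^k_{ij})$ with $q^k_{ij}$ the total weight of in-forests with $k$ arcs in which $i$ lies in a tree rooted at $j$; $J_k=\sigma_k^{-1}Q_k$ for $k=0,\dots,n-d$. $\mu_\lambda(A)$ denotes the multiplicity of $\lambda$ as an eigenvalue of the square matrix $A$. *)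

From HB Require Import structures.
From mathcomp Require Import all_boot all_order all_algebra.
Set Implicit Arguments. Unset Strict Implicit. Unset Printing Implicit Defensive.
Import Order.TTheory GRing.Theory Num.Theory.
Local Open Scope ring_scope.

(* A weighted digraph on vertex set 'I_n is given by its weight matrix W:
   there is an arc i -> j iff 0 < W i j.  A spanning subgraph is a set of arcs. *)
Section Digraph.
Variables (R : realFieldType) (n : nat) (W : 'M[R]_n).

Definition arcs : {set 'I_n * 'I_n} := [set a | 0 < W a.1 a.2].

Definition laplacian : 'M[R]_n :=
  \matrix_(i, j) if i == j then \sum_(k | k != i) W i k else - W i j.

Definition outdeg (F : {set 'I_n * 'I_n}) (v : 'I_n) : nat :=
  #|[set a in F | a.1 == v]|.

Definition weak_adj (F : {set 'I_n * 'I_n}) : rel 'I_n :=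
  fun x y => ((x, y) \in F) || ((y, x) \in F).
Definition wcomp (F : {set 'I_n * 'I_n}) (v : 'I_n) : {set 'I_n} :=
  [set u | connect (weak_adj F) v u].

(* F is an in-forest of Gamma: its arcs are arcs of Gamma, and each weak
   component is a converging tree (exactly one vertex of outdegree 0, all
   others of outdegree 1). *)
Definition is_inforest (F : {set 'I_n * 'I_n}) : bool :=
  (F \subset arcs) &&
  [forall v, (#|[set u in wcomp F v | outdeg F u == 0%N]| == 1%N) &&
             [forall u in wcomp F v, outdeg F u <= 1]%N].

(* number of trees = number of roots *)
Definition ntrees (F : {set 'I_n * 'I_n}) : nat :=
  #|[set v | outdeg F v == 0%N]|.

Definition inforest_dim : nat :=
  \big[minn/n]_(F : {set 'I_n * 'I_n} | is_inforest F) ntrees F.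

Definition sweight (F : {set 'I_n * 'I_n}) : R := \prod_(a in F) W a.1 a.2.

Definition sigma (k : nat) : R :=
  \sum_(F : {set 'I_n * 'I_n} | is_inforest F && (#|F| == k)) sweight F.

Definition rooted_at (F : {set 'I_n * 'I_n}) (i j : 'I_n) : bool :=
  (j \in wcomp F i) && (outdeg F j == 0%N).

Definition Qmx (k : nat) : 'M[R]_n :=
  \matrix_(i, j) \sum_(F : {set 'I_n * 'I_n} |
                        [&& is_inforest F, #|F| == k & rooted_at F i j]) sweight F.

Definition Jmx (k : nat) : 'M[R]_n := (sigma k)^-1 *: Qmx k.

End Digraph.

Definition eigmult (R : fieldType) (n : nat) (lambda : R) (A : 'M[R]_n) : nat :=
  mup lambda (char_poly A).

From HB Require Import structures.
From mathcomp Require Import all_boot all_order all_algebra.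
From mathcomp Require Import ring zify.
Set Implicit Arguments. Unset Strict Implicit. Unset Printing Implicit Defensive.
Import Order.TTheory GRing.Theory Num.Theory.

(* Encode an in-forest by the map sending each vertex to the head of its
   out-arc.  Cutting the out-arc of a vertex [i], or attaching a root [i] to a
   vertex [m] of another tree, gives the recurrence
   [L Q_k = sigma_(k+1) I - Q_(k+1)]: in [sum_m w_im (q^k_ij - q^k_mj)] the
   pairs [(m, F)] where [i] is not a root cancel under
   [(m, F) |-> (F i, F[i := m])], and those where [i] is a root correspond to
   the forests with [k+1] arcs in which [i] is not a root.  No in-forest has
   more than [n - d] arcs, so [Q_(n-d+1) = 0] and [L Q_(n-d) = Q_(n-d) L = 0];
   the recurrence then gives [Q_(n-d) Q_k = Q_k Q_(n-d) = sigma_k Q_(n-d)],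
   with [sigma_k > 0] for [k <= n - d] since cutting arcs one at a time yields
   forests of every smaller size.  Hence [J] is idempotent, and an idempotent
   matrix is conjugate to a triangular one with diagonal [1,..,1,0,..,0]; its
   trace is [d] because a forest with [k] arcs has [n - k] roots, so
   [tr Q_k = (n - k) sigma_k]. *)

(** * Functional digraphs *)

Section FunctionalForest.
Variable T : finType.
Implicit Types (f g : {ffun T -> T}) (i m x y z : T).

Definition acyclic f := [forall x, [exists y, fconnect f x y && (f y == y)]].

Definition sink f x := odflt x [pick y | fconnect f x y && (f y == y)].

Definition redirect f i m : {ffun T -> T} := [ffun x => if x == i then m else f x].

Lemma redirect_at f i m : redirect f i m i = m.
Proof. by rewrite ffunE eqxx. Qed.

Lemma redirect_other f i m x : x != i -> redirect f i m x = f x.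
Proof. by rewrite ffunE => /negbTE ->. Qed.

Lemma redirectK f i m p : redirect (redirect f i m) i p = redirect f i p.
Proof. by apply/ffunP => x; rewrite !ffunE; case: eqP. Qed.

Lemma redirect_id f i : redirect f i (f i) = f.
Proof. by apply/ffunP => x; rewrite ffunE; case: eqP => // ->. Qed.

Lemma redirect_cutK f i : redirect (redirect f i i) i (f i) = f.
Proof. by rewrite redirectK redirect_id. Qed.

Lemma fconnect_iterP f x y : fconnect f x y -> exists k, y = iter k f x.
Proof. by move=> /iter_findex <-; exists (findex f x y). Qed.

Lemma fconnect_fixed f x y : f y = y -> fconnect f y x -> x = y.
Proof. by move=> fy /fconnect_iterP [k ->]; rewrite iter_fix. Qed.

Lemma fconnect_next f y z : fconnect f y z -> y != z -> fconnect f (f y) z.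
Proof.
move=> /fconnect_iterP [[|k] ->]; first by rewrite eqxx.
by rewrite iterSr => _; apply: fconnect_iter.
Qed.

Section Sink.
Variables (f : {ffun T -> T}) (acf : acyclic f).

Lemma sink_spec x : fconnect f x (sink f x) && (f (sink f x) == sink f x).
Proof.
move/forallP/(_ x): acf => /existsP [y Hy]; rewrite /sink.
by case: pickP => [z -> //|/(_ y)]; rewrite Hy.
Qed.

Lemma sink_connect x : fconnect f x (sink f x).
Proof. by case/andP: (sink_spec x). Qed.

Lemma sink_fixed x : f (sink f x) = sink f x.
Proof. by case/andP: (sink_spec x) => _ /eqP. Qed.

Lemma sink_unique x y : fconnect f x y -> f y = y -> sink f x = y.
Proof.
move=> /fconnect_iterP [a ->] fy.
have /fconnect_iterP [b eb] := sink_connect x; have fs := sink_fixed x.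
rewrite eb in fs *; have [ab|/ltnW ba] := leqP a b.
  by rewrite -(subnK ab) iterD (iter_fix _ fy).
by rewrite -(subnK ba) iterD (iter_fix _ fs).
Qed.

Lemma sink_eq x : (sink f x == x) = (f x == x).
Proof.
apply/eqP/eqP => [<-|fx]; first exact: sink_fixed.
exact: sink_unique (connect0 _ _) fx.
Qed.

Lemma sink_next x : sink f (f x) = sink f x.
Proof.
apply: sink_unique (sink_fixed x).
have [e|ne] := eqVneq x (sink f x); last exact: fconnect_next (sink_connect x) ne.
by rewrite {1}e sink_fixed; apply: connect0.
Qed.

Lemma fixed_of_cycle i : fconnect f (f i) i -> f i = i.
Proof.
move=> c.
have back k : fconnect f (iter k f i) i.
  elim: k => [|k IH]; first exact: connect0.
  have [e|ne] := eqVneq (iter k f i) i; first by rewrite iterS e.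
  by rewrite iterS; apply: fconnect_next.
have /fconnect_iterP [k ek] := sink_connect i.
have := back k; rewrite -ek => /(fconnect_fixed (sink_fixed i)) ei.
by rewrite {1}ei sink_fixed -ei.
Qed.

End Sink.

Lemma fconnect_redirect f g i x y : (forall z, z != i -> g z = f z) ->
  fconnect f x y -> fconnect g x y || (fconnect f x i && fconnect g x i).
Proof.
move=> fg /fconnect_iterP [k ->]; elim: k => [|k IH]; first by rewrite connect0.
case/orP: IH => [c|]; last by move=> ->; rewrite orbT.
have [e|ne] := eqVneq (iter k f x) i; first by rewrite -e c fconnect_iter orbT.
by rewrite iterS -(fg _ ne) (connect_trans c (fconnect1 _ _)).
Qed.

Section Attach.
Variables (f : {ffun T -> T}) (i m : T).
Hypotheses (acf : acyclic f) (fi : f i = i) (sm : sink f m != i).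
Let g := redirect f i m.

Lemma redirect_sink_spec x (s := if sink f x == i then sink f m else sink f x) :
  fconnect g x s && (g s == s).
Proof.
rewrite {}/s.
have gf z : z != i -> g z = f z by apply: redirect_other.
have off y : sink f y != i -> fconnect g y (sink f y) && (g (sink f y) == sink f y).
  move=> sy; rewrite gf // sink_fixed // eqxx andbT.
  case/orP: (fconnect_redirect gf (sink_connect acf y)) => // /andP [c _].
  by rewrite (sink_unique acf c fi) eqxx in sy.
case: ifP => [/eqP sx|/negbT]; last exact: off.
have /andP [cm ->] := off _ sm; rewrite andbT.
have cxi : fconnect g x i.
  by case/orP: (fconnect_redirect gf (sink_connect acf x)) => [|/andP[]//]; rewrite sx.
apply: connect_trans cxi (connect_trans _ cm).
by have := fconnect1 g i; rewrite /g redirect_at.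
Qed.

Lemma acyclic_attach : acyclic g.
Proof.
apply/forallP => x; apply/existsP.
by have := redirect_sink_spec x; set s := if _ then _ else _; exists s.
Qed.

Lemma sink_attach x : sink g x = if sink f x == i then sink f m else sink f x.
Proof.
have /andP [c /eqP gs] := redirect_sink_spec x.
exact: (sink_unique acyclic_attach c gs).
Qed.

End Attach.

Section Cut.
Variables (f : {ffun T -> T}) (i : T) (acf : acyclic f).
Let h := redirect f i i.

Lemma acyclic_cut : acyclic h.
Proof.
have hf z : z != i -> h z = f z by apply: redirect_other.
apply/forallP => x; apply/existsP.
case/orP: (fconnect_redirect hf (sink_connect acf x)) => [c|/andP [_ c]].
  exists (sink f x); rewrite c /=.
  have [->|ne] := eqVneq (sink f x) i; first by rewrite redirect_at.
  by rewrite hf // sink_fixed.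
by exists i; rewrite c redirect_at /=.
Qed.

Lemma sink_cut_neq : f i != i -> sink h (f i) != i.
Proof.
move=> fi; apply: contra fi => /eqP e; apply/eqP/(fixed_of_cycle acf).
have fh z : z != i -> f z = h z by move=> /(redirect_other f i) ->.
have := sink_connect acyclic_cut (f i); rewrite e.
by move=> /(fconnect_redirect fh) /orP [|/andP []].
Qed.

End Cut.

End FunctionalForest.

Local Open Scope ring_scope.

(** * Weighted functional forests *)

Lemma sumr_involutionN (I : finType) (R : numDomainType) (P : pred I)
    (s : I -> I) (F : I -> R) :
  {in P, forall x, P (s x) /\ s (s x) = x /\ F (s x) = - F x} ->
  \sum_(x | P x) F x = 0.
Proof.
move=> sP.
have ssK : {in P, involutive s} by move=> x /sP [_ []].
have e : \sum_(x | P x) F x = - \sum_(x | P x) F x.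
  rewrite -sumrN [LHS](reindex_onto s s ssK); apply: eq_big => x.
    apply/andP/idP => [[Psx /eqP <-]|Px]; first by case: (sP _ Psx).
    by case: (sP x Px) => Psx [-> _]; rewrite eqxx.
  move=> /andP [Psx /eqP ex]; have Px : P x by rewrite -ex; case: (sP _ Psx).
  by case: (sP x Px) => _ [_ ->].
by apply/eqP; rewrite -[_ == 0](mulrn_eq0 _ 2) mulr2n {1}e addNr.
Qed.

Section ForestFunctions.
Variables (T : finType) (R : numDomainType) (W : T -> T -> R).
Hypotheses (W_loop0 : forall i, W i i = 0) (W_ge0 : forall i j, 0 <= W i j).
Implicit Types (f g h : {ffun T -> T}) (i j m x : T) (k : nat).

(* A map [f] encodes the in-forest with arcs [x -> f x] for [f x != x]; its
   roots are the fixed points, and [sink f x] is the root of the tree of [x]. *)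
Definition forestf f := acyclic f && [forall x, (f x != x) ==> (0 < W x (f x))].
Definition narcs f := #|[set x | f x != x]|.
Definition fweight f := \prod_(x | f x != x) W x (f x).
Definition kforest k f := forestf f && (narcs f == k).
Definition sigmaf k := \sum_(f | kforest k f) fweight f.
Definition Qf k i j := \sum_(f | kforest k f && (sink f i == j)) fweight f.

Lemma forestf_acyclic f : forestf f -> acyclic f.
Proof. by case/andP. Qed.

Lemma forestf_arc f x : forestf f -> f x != x -> 0 < W x (f x).
Proof. by case/andP => _ /forallP /(_ x) /implyP. Qed.

Lemma arc_neq i m : 0 < W i m -> m != i.
Proof. by apply: contraTneq => ->; rewrite W_loop0 ltxx. Qed.

Lemma sink_root f i : forestf f -> f i = i -> sink f i = i.
Proof. by move=> /forestf_acyclic ac fi; apply/eqP; rewrite sink_eq // fi. Qed.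

Lemma forestf_attach f i m : forestf f -> f i = i -> sink f m != i -> 0 < W i m ->
  forestf (redirect f i m).
Proof.
move=> ff fi sm wm; rewrite /forestf acyclic_attach ?forestf_acyclic //=.
apply/forallP => x; apply/implyP.
have [->|xi] := eqVneq x i; first by rewrite redirect_at.
by rewrite redirect_other //; apply: forestf_arc.
Qed.

Lemma forestf_cut f i : forestf f -> forestf (redirect f i i).
Proof.
move=> ff; rewrite /forestf acyclic_cut ?forestf_acyclic //=.
apply/forallP => x; apply/implyP.
have [->|xi] := eqVneq x i; first by rewrite redirect_at eqxx.
by rewrite redirect_other //; apply: forestf_arc.
Qed.

Lemma narcs_attach f i m : f i = i -> m != i ->
  narcs (redirect f i m) = (narcs f).+1.
Proof.
move=> fi mi; rewrite /narcs.
have -> : [set x | redirect f i m x != x] = i |: [set x | f x != x].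
  apply/setP => x; rewrite !inE.
  by have [->|xi] := eqVneq x i; rewrite ?redirect_at ?redirect_other.
by rewrite cardsU1 inE fi eqxx.
Qed.

Lemma fweight_attach f i m : f i = i -> m != i ->
  fweight (redirect f i m) = W i m * fweight f.
Proof.
move=> fi mi; rewrite /fweight (bigD1 i) ?redirect_at //=; congr (_ * _).
apply: eq_big => [x|x /andP [_ xi]]; last by rewrite redirect_other.
have [->|xi] := eqVneq x i; first by rewrite andbF fi eqxx.
by rewrite redirect_other // andbT.
Qed.

Lemma QfE k i j : Qf k i j = \sum_(f | kforest k f) fweight f * (sink f i == j)%:R.
Proof.
rewrite /Qf big_mkcondr; apply: eq_bigr => f _.
by case: eqP; rewrite ?mulr1 ?mulr0.
Qed.

Definition recurrence_term i j (p : T * {ffun T -> T}) :=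
  W i p.1 * fweight p.2 * ((sink p.2 i == j)%:R - (sink p.2 p.1 == j)%:R).

Definition crossing i (p : T * {ffun T -> T}) :=
  (0 < W i p.1) && (sink p.2 p.1 != sink p.2 i).

Lemma recurrence_lhs_crossing k i j : \sum_m W i m * (Qf k i j - Qf k m j)
  = \sum_(p | kforest k p.2 && crossing i p) recurrence_term i j p.
Proof.
have -> : \sum_m W i m * (Qf k i j - Qf k m j)
    = \sum_(p | kforest k p.2) recurrence_term i j p.
  rewrite -(pair_big xpredT (kforest k) (fun m f => recurrence_term i j (m, f))) /=.
  apply: eq_bigr => m _; rewrite !QfE -sumrB mulr_sumr.
  by apply: eq_bigr => f _; rewrite /recurrence_term /=; ring.
rewrite (bigID (crossing i)) /= [X in _ + X]big1 ?addr0 // => -[m f] /andP [_].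
rewrite /crossing /= lt0r W_ge0 andbT negb_and !negbK /recurrence_term /=.
by case/orP => /eqP ->; rewrite ?subrr ?mulr0 ?mul0r.
Qed.

Lemma crossing_redirect k f i m (g := redirect f i m) (h := redirect f i i) :
  kforest k f -> f i != i -> crossing i (m, f) ->
  [/\ kforest k g, crossing i (f i, g), sink g i = sink f m, sink g (f i) = sink f i
    & fweight f = W i (f i) * fweight h /\ fweight g = W i m * fweight h].
Proof.
move=> /andP [ff nk] fi /andP [/= wm sne].
have fh : forestf h := forestf_cut i ff.
have hi : h i = i := redirect_at f i i.
have shfi : sink h (f i) != i := sink_cut_neq (forestf_acyclic ff) fi.
have wfi : 0 < W i (f i) := forestf_arc ff fi.
have shi : sink h i = i := sink_root fh hi.
have sh x : sink f x = if sink h x == i then sink h (f i) else sink h x.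
  by rewrite -{1}(redirect_cutK f i) sink_attach // forestf_acyclic.
have shm : sink h m != i by apply: contra sne => /eqP e; rewrite !sh e shi eqxx.
have eg : g = redirect h i m by rewrite /h redirectK.
have sg x : sink g x = if sink h x == i then sink h m else sink h x.
  by rewrite eg sink_attach // forestf_acyclic.
have sgi : sink g i = sink f m by rewrite sg shi eqxx sh (negbTE shm).
have sgfi : sink g (f i) = sink f i by rewrite sg (negbTE shfi) sh shi eqxx.
have nf : narcs f = (narcs h).+1.
  by rewrite -{1}(redirect_cutK f i) narcs_attach.
split => //.
- by rewrite /kforest eg forestf_attach // narcs_attach ?arc_neq // -nf nk.
- by rewrite /crossing /= wfi sgi sgfi eq_sym.
- split; first by rewrite -{1}(redirect_cutK f i) fweight_attach ?arc_neq.
  by rewrite eg fweight_attach ?arc_neq.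
Qed.

(* [(m, f) |-> (f i, f[i := m])] is a sign-reversing involution. *)
Lemma sum_crossing_nonroot k i j :
  \sum_(p | (kforest k p.2 && crossing i p) && (p.2 i != i))
    recurrence_term i j p = 0.
Proof.
apply: (sumr_involutionN (P := fun p => (kforest k p.2 && crossing i p) && (p.2 i != i))
                         (s := fun p => (p.2 i, redirect p.2 i p.1))).
move=> [m f] /andP [/andP [kf cr] fi] /=.
have [kg crg sgi sgfi [wf wg]] := crossing_redirect kf fi cr.
have mi : m != i by case/andP: cr => /arc_neq.
rewrite /= kg crg redirect_at mi redirectK redirect_id; split => //; split => //.
by rewrite /recurrence_term /= sgi sgfi wf wg; ring.
Qed.

Lemma kforest_cut k i g :
  (kforest k (redirect g i i) && crossing i (g i, redirect g i i))
  = kforest k.+1 g && (g i != i).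
Proof.
set h := redirect g i i; have hi : h i = i := redirect_at g i i.
have eg : g = redirect h i (g i) by rewrite redirect_cutK.
have ng : g i != i -> narcs g = (narcs h).+1.
  by move=> gi; rewrite [in LHS]eg narcs_attach.
apply/andP/andP => [[/andP [fh nk] /andP [/= wm sne]]|[/andP [fg nk] gi]].
  have gi := arc_neq wm; rewrite (sink_root fh hi) in sne.
  by rewrite /kforest ng // eqSS nk andbT {1}eg forestf_attach.
have fh : forestf h := forestf_cut i fg.
rewrite /kforest /crossing /= fh (sink_root fh hi) sink_cut_neq ?forestf_acyclic //.
by rewrite forestf_arc // -eqSS -ng.
Qed.

Lemma recurrence_term_cut i j g : forestf g -> g i != i ->
  recurrence_term i j (g i, redirect g i i)
  = fweight g * ((i == j)%:R - (sink g i == j)%:R).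
Proof.
move=> fg gi; set h := redirect g i i; have hi : h i = i := redirect_at g i i.
have eg : g = redirect h i (g i) by rewrite redirect_cutK.
have fh : forestf h := forestf_cut i fg.
have shg := sink_cut_neq (forestf_acyclic fg) gi.
have sgi : sink g i = sink h (g i).
  by rewrite [in LHS]eg (sink_attach (forestf_acyclic fh) hi shg) (sink_root fh hi) eqxx.
rewrite /recurrence_term /= sgi (sink_root fh hi) [in RHS]eg.
by rewrite fweight_attach ?arc_neq ?forestf_arc // redirect_at.
Qed.

(* Attaching the root [i] to [m] is a bijection onto the forests with [k+1]
   arcs in which [i] is not a root; its inverse cuts the out-arc of [i]. *)
Lemma sum_crossing_root k i j :
  \sum_(p | (kforest k p.2 && crossing i p) && (p.2 i == i)) recurrence_term i j p
  = (i == j)%:R * sigmaf k.+1 - Qf k.+1 i j.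
Proof.
rewrite QfE /sigmaf mulr_sumr -sumrB [RHS](bigID (fun g => g i == i)) /=.
rewrite [X in _ = X + _]big1 ?add0r => [|g /andP [/andP [fg _] /eqP gi]]; last first.
  by rewrite sink_root // mulrC subrr.
rewrite (reindex_onto (fun g => (g i, redirect g i i)) (fun p => redirect p.2 i p.1)).
  apply: eq_big => g; rewrite /= kforest_cut.
    by rewrite redirect_at eqxx redirect_cutK eqxx !andbT.
  move=> /andP [/andP [/andP [/andP [fg _] gi] _] _].
  by rewrite recurrence_term_cut // mulrBr [_ * (i == j)%:R]mulrC.
move=> [m f] /andP [_ /= /eqP fi].
by rewrite redirect_at redirectK -{2}fi redirect_id.
Qed.

Lemma forest_recurrence k i j : \sum_m W i m * (Qf k i j - Qf k m j)
  = (i == j)%:R * sigmaf k.+1 - Qf k.+1 i j.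
Proof.
rewrite recurrence_lhs_crossing (bigID (fun p : T * {ffun T -> T} => p.2 i == i)) /=.
by rewrite sum_crossing_root sum_crossing_nonroot addr0.
Qed.

Lemma narcs_eq0 f : (narcs f == 0%N) = (f == [ffun x => x]).
Proof.
rewrite cards_eq0; apply/eqP/eqP => [e|->].
  apply/ffunP => x; rewrite ffunE; apply/eqP/negPn/negP => fx.
  by have := in_set0 x; rewrite -e inE fx.
by apply/setP => x; rewrite !inE ffunE eqxx.
Qed.

Lemma kforest0 f : kforest 0 f = (f == [ffun x => x]).
Proof.
rewrite /kforest narcs_eq0; have [->|_] := eqVneq f [ffun x => x]; last by rewrite andbF.
rewrite andbT; apply/andP; split; apply/forallP => x; last by rewrite ffunE eqxx.
by apply/existsP; exists x; rewrite connect0 ffunE eqxx.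
Qed.

Lemma sink_ffun_id x : sink [ffun x => x] x = x.
Proof.
have /andP [/forestf_acyclic acf _] : kforest 0 [ffun x : T => x] by rewrite kforest0.
by apply/eqP; rewrite sink_eq // ffunE.
Qed.

Lemma fweight_ffun_id : fweight [ffun x => x] = 1.
Proof. by rewrite /fweight big_pred0 // => x; rewrite ffunE eqxx. Qed.

Lemma sigmaf0 : sigmaf 0 = 1.
Proof. by rewrite /sigmaf (eq_bigl _ _ kforest0) big_pred1_eq fweight_ffun_id. Qed.

Lemma Qf0 i j : Qf 0 i j = (i == j)%:R.
Proof.
by rewrite QfE (eq_bigl _ _ kforest0) big_pred1_eq fweight_ffun_id mul1r sink_ffun_id.
Qed.

Lemma fweight_gt0 f : forestf f -> 0 < fweight f.
Proof. by move=> ff; apply: prodr_gt0 => x; apply: forestf_arc. Qed.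

Lemma sigmaf_gt0 k f : kforest k f -> 0 < sigmaf k.
Proof.
move=> kf; rewrite /sigmaf (bigD1 f) //= ltr_wpDr ?fweight_gt0 ?(andP kf).1 //.
by apply: sumr_ge0 => g /andP [/andP [fg _] _]; rewrite ltW ?fweight_gt0.
Qed.

Lemma kforest_leq_narcs f k : forestf f -> (k <= narcs f)%N -> exists g, kforest k g.
Proof.
move=> ff; move nf : (narcs f) => m; elim: m f nf ff => [|m IH] f nf ff.
  by rewrite leqn0 => /eqP ->; exists f; rewrite /kforest nf eqxx andbT.
rewrite leq_eqVlt ltnS => /orP [/eqP ->|km]; first by exists f; rewrite /kforest nf eqxx andbT.
have [x fx] : exists x, f x != x.
  apply/existsP; rewrite -negb_forall; apply: contraTN isT => /forallP fid.
  have : f == [ffun x => x] by apply/eqP/ffunP => x; rewrite ffunE; apply/eqP/fid.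
  by rewrite -narcs_eq0 nf.
apply: (IH (redirect f x x)) (forestf_cut x ff) km.
by have := narcs_attach (redirect_at f x x) fx; rewrite redirect_cutK nf => -[->].
Qed.

Lemma sum_Qf_diag k : \sum_i Qf k i i = (#|T| - k)%:R * sigmaf k.
Proof.
under eq_bigr => i _ do rewrite QfE.
rewrite exchange_big /sigmaf mulr_sumr; apply: eq_bigr => f /andP [ff /eqP nk].
rewrite -mulr_sumr mulrC -natr_sum; congr (_%:R * _).
rewrite -nk /narcs -[X in (X - _)%N](cardsC [set x | f x != x]) addKn -sum1_card.
rewrite [RHS]big_mkcond; apply: eq_bigr => x _.
by rewrite !inE negbK sink_eq ?forestf_acyclic //; case: eqP.
Qed.

End ForestFunctions.

(** * In-forests as functional forests *)

Section ArcSets.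
Variables (R : realFieldType) (n : nat) (W : 'M[R]_n).
Hypothesis W_loop0 : forall i, W i i = 0.
Local Notation T := 'I_n.
Implicit Types (f : {ffun T -> T}) (F : {set T * T}) (i j u v x y : T).

Definition farcs f : {set T * T} := [set a | (f a.1 == a.2) && (a.1 != a.2)].

Lemma in_farcs f x y : ((x, y) \in farcs f) = (f x == y) && (x != y).
Proof. by rewrite inE. Qed.

Lemma farcs_graph f : farcs f = (fun x => (x, f x)) @: [set x | f x != x].
Proof.
apply/setP => -[x y]; rewrite in_farcs; apply/andP/imsetP => [[/eqP <- xf]|[z]].
  by exists x; rewrite // inE eq_sym.
by rewrite inE => zf [-> ->]; rewrite eqxx eq_sym.
Qed.

Lemma card_farcs f : #|farcs f| = narcs f.
Proof. by rewrite farcs_graph card_imset // => x y [->]. Qed.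

Lemma sweight_farcs f : sweight W (farcs f) = fweight W f.
Proof.
rewrite /sweight farcs_graph big_imset => [|x y _ _ [] //].
by apply: eq_bigl => x; rewrite inE.
Qed.

Lemma outdeg_farcs f u : outdeg (farcs f) u = (f u != u).
Proof.
rewrite /outdeg; have [fu|fu] /= := eqVneq (f u) u.
  apply/eqP; rewrite cards_eq0; apply/eqP/setP => -[x y]; rewrite !inE /=.
  by case: (x =P u) => [->|]; rewrite ?andbF // fu andbT andbN.
have -> : [set a in farcs f | a.1 == u] = [set (u, f u)].
  apply/setP => -[x y]; rewrite !inE /= xpair_eqE.
  apply/andP/andP => [[/andP [/eqP <- _] /eqP ->]|[/eqP -> /eqP ->]] //.
  by rewrite eqxx eq_sym fu.
exact: cards1.
Qed.

Lemma farcs_inj : injective farcs.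
Proof.
have sub f g x : farcs f = farcs g -> f x != x -> g x = f x.
  move=> e fx; have : (x, f x) \in farcs f by rewrite in_farcs eqxx eq_sym.
  by rewrite e in_farcs => /andP [/eqP].
move=> f g e; apply/ffunP => x.
have [gx|gx] := eqVneq (g x) x; last exact: sub _ _ _ (esym e) gx.
by have [fx|fx] := eqVneq (f x) x; [rewrite fx gx | rewrite (sub _ _ _ e fx)].
Qed.

Lemma weak_connect_inv f (U : Type) (h : T -> U) : (forall z, h (f z) = h z) ->
  forall x y, connect (weak_adj (farcs f)) x y -> h x = h y.
Proof.
move=> hf x y /connectP [p pth ->]; elim: p x pth => //= z p IH x /andP [e pth].
rewrite -IH //; move: e; rewrite /weak_adj !in_farcs.
by case/orP => /andP [/eqP <- _].
Qed.

Lemma fconnect_weak f x y : fconnect f x y -> connect (weak_adj (farcs f)) x y.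
Proof.
apply: connect_sub => a _ /eqP <-.
have [->|ne] := eqVneq (f a) a; first exact: connect0.
by apply: connect1; rewrite /weak_adj in_farcs eqxx eq_sym ne.
Qed.

Lemma wcomp_sink f u v : acyclic f ->
  (u \in wcomp (farcs f) v) && (f u == u) = (u == sink f v).
Proof.
move=> ac; rewrite inE; apply/andP/eqP => [[c /eqP fu]|->].
  by rewrite (weak_connect_inv (sink_next ac) c); apply/esym/sink_unique.
by rewrite fconnect_weak ?sink_connect ?sink_fixed.
Qed.

Lemma acyclic_weak_root f :
  (forall x, exists2 u, connect (weak_adj (farcs f)) x u & f u = u) -> acyclic f.
Proof.
move=> root; apply/forallP => x; have [u c fu] := root x.
pose reaches z := [exists y, fconnect f z y && (f y == y)].
suff : reaches x = reaches u.
  by rewrite /reaches => ->; apply/existsP; exists u; rewrite connect0 fu eqxx.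
apply: weak_connect_inv c => z; apply/existsP/existsP => -[y /andP [c fy]].
  by exists y; rewrite fy (connect_trans (fconnect1 f z) c).
exists y; rewrite fy andbT; have [e|ne] := eqVneq z y; last exact: fconnect_next.
by rewrite e (eqP fy) connect0.
Qed.

Lemma farcs_inforest f : forestf W f -> is_inforest W (farcs f).
Proof.
move=> ff; apply/andP; split.
  apply/subsetP => -[x y]; rewrite in_farcs inE /= => /andP [/eqP <- xf].
  by apply: forestf_arc; rewrite // eq_sym.
apply/forallP => v; apply/andP; split.
  have -> : [set u in wcomp (farcs f) v | outdeg (farcs f) u == 0%N] = [set sink f v].
    apply/setP => u; rewrite in_set1 in_set outdeg_farcs eqb0 negbK.
    exact: wcomp_sink (forestf_acyclic ff).
  by rewrite cards1.
by apply/forall_inP => u _; rewrite outdeg_farcs leq_b1.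
Qed.

Lemma rooted_at_farcs f i j : acyclic f -> rooted_at (farcs f) i j = (sink f i == j).
Proof. by move=> ac; rewrite /rooted_at outdeg_farcs eqb0 negbK [RHS]eq_sym wcomp_sink. Qed.

Lemma ntrees_farcs f : ntrees (farcs f) = (n - narcs f)%N.
Proof.
rewrite /ntrees /narcs -[X in (X - _)%N]card_ord -(cardsC [set x | f x != x]) addKn.
by apply: eq_card => v; rewrite !inE outdeg_farcs eqb0.
Qed.

Lemma inforest_farcs F : is_inforest W F -> exists2 f, forestf W f & F = farcs f.
Proof.
case/andP => /subsetP sub /forallP tree.
have noloop x : (x, x) \notin F by apply/negP => /sub; rewrite inE /= W_loop0 ltxx.
have od1 u : (outdeg F u <= 1)%N.
  by case/andP: (tree u) => _ /forall_inP; apply; rewrite inE connect0.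
have out_uniq x y z : (x, y) \in F -> (x, z) \in F -> y = z.
  move=> xy xz; have /card_le1_eqP := od1 x.
  by move=> /(_ (x, y) (x, z)); rewrite !inE xy xz eqxx => /(_ erefl erefl) [].
pose f := [ffun x => odflt x [pick y | (x, y) \in F]].
have eF : F = farcs f.
  apply/setP => -[x y]; rewrite in_farcs ffunE; case: pickP => [z xz|none] /=.
    apply/idP/andP => [xy|[/eqP <- _] //]; rewrite (out_uniq _ _ _ xz xy).
    by split => //; apply: contraTneq xy => ->; apply: noloop.
  by rewrite none; apply/esym/negbTE; rewrite negb_and negbK orbC; case: eqP.
exists f => //; apply/andP; split; last first.
  apply/forallP => x; apply/implyP => fx.
  have : (x, f x) \in F by rewrite eF in_farcs eqxx eq_sym.
  by move/sub; rewrite inE.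
apply: acyclic_weak_root => x; have [u] := cards1P (andP (tree x)).1.
move/setP/(_ u); rewrite !inE eqxx eF outdeg_farcs eqb0 negbK => /andP [c /eqP fu].
by exists u.
Qed.

End ArcSets.

Section InForests.
Variables (R : realFieldType) (n : nat) (W : 'M[R]_n).
Hypotheses (W_loop0 : forall i, W i i = 0) (W_ge0 : forall i j, 0 <= W i j).
Local Notation T := 'I_n.
Local Notation d := (inforest_dim W).
Implicit Types (f : {ffun T -> T}) (F : {set T * T}) (i j : T) (k : nat).

Lemma sum_inforest (G : {set T * T} -> R) (cF : pred {set T * T})
    (c : pred {ffun T -> T}) :
  (forall f, forestf W f -> cF (farcs f) = c f) ->
  \sum_(F | is_inforest W F && cF F) G F = \sum_(f | forestf W f && c f) G (farcs f).
Proof.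
move=> cE; rewrite -(big_imset _ (in2W (@farcs_inj n))) /=; apply: eq_bigl => F.
apply/andP/imsetP => [[/(inforest_farcs W_loop0) [f ff ->] cf]|[f]].
  by exists f; rewrite // unfold_in ff -cE.
by rewrite unfold_in => /andP [ff cf] ->; rewrite farcs_inforest // cE.
Qed.

Lemma sigma_sigmaf k : sigma W k = sigmaf W k.
Proof.
rewrite /sigma (@sum_inforest _ _ (fun f => narcs f == k)) => [|f _]; last first.
  by rewrite card_farcs.
by apply: eq_bigr => f _; rewrite sweight_farcs.
Qed.

Lemma sum_rooted_inforest k i j :
  \sum_(F | [&& is_inforest W F, #|F| == k & rooted_at F i j]) sweight W F = Qf W k i j.
Proof.
rewrite (@sum_inforest _ _ (fun f => (narcs f == k) && (sink f i == j))).
  by apply: eq_big => [f|f _]; rewrite ?andbA ?sweight_farcs.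
by move=> f ff; rewrite card_farcs (rooted_at_farcs _ _ (forestf_acyclic ff)).
Qed.

Lemma Qmx_Qf k i j : Qmx W k i j = Qf W k i j.
Proof. by rewrite mxE sum_rooted_inforest. Qed.

Lemma laplacian_Qmx k : laplacian W *m Qmx W k = sigma W k.+1 *: 1%:M - Qmx W k.+1.
Proof.
apply/matrixP => i j; rewrite !mxE sum_rooted_inforest sigma_sigmaf mulrC.
rewrite -(forest_recurrence W_loop0 W_ge0) (bigD1 i) //= [RHS](bigD1 i) //=.
rewrite W_loop0 mul0r add0r mxE eqxx mulr_suml -big_split /=.
by apply: eq_bigr => m mi; rewrite !Qmx_Qf mxE eq_sym (negbTE mi); ring.
Qed.

Lemma Qmx0 : Qmx W 0 = 1%:M.
Proof. by apply/matrixP => i j; rewrite Qmx_Qf Qf0 mxE. Qed.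

Lemma sigma0 : sigma W 0 = 1.
Proof. by rewrite sigma_sigmaf sigmaf0. Qed.

Lemma narcs_leq f : (narcs f <= n)%N.
Proof. by have := max_card (mem [set x | f x != x]); rewrite card_ord. Qed.

Lemma narcs_leq_dim f : forestf W f -> (narcs f <= n - d)%N.
Proof.
move=> ff; have Fd : (d <= ntrees (farcs f))%N.
  exact: (bigmin_le_cond (T := nat) n (@ntrees n) (farcs_inforest ff)).
by rewrite ntrees_farcs in Fd; have := narcs_leq f; lia.
Qed.

Lemma exists_forest_dim : exists2 f, forestf W f & narcs f = (n - d)%N.
Proof.
pose K z := exists2 f, forestf W f & z = (n - narcs f)%N.
have [f ff ->] : K d.
  apply: big_ind => [|a b [f ff ->] [g fg ->]|F /(inforest_farcs W_loop0) [f ff ->]].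
  - have /andP [fid /eqP nid] : kforest W 0 [ffun x => x] by rewrite kforest0.
    by exists [ffun x => x]; rewrite // nid subn0.
  - by case: leqP => _; [exists f | exists g].
  - by exists f; rewrite ?ntrees_farcs.
by exists f; rewrite // subKn ?narcs_leq.
Qed.

Lemma inforest_dim_leq : (d <= n)%N.
Proof. exact: (bigmin_le_id (T := nat)). Qed.

Lemma sigma_gt0 k : (k <= n - d)%N -> 0 < sigma W k.
Proof.
move=> kd; have [f ff nf] := exists_forest_dim.
have [g kg] := kforest_leq_narcs ff (leq_trans kd (eq_leq (esym nf))).
by rewrite sigma_sigmaf (sigmaf_gt0 kg).
Qed.

Lemma sigma_Qmx_eq0 k : (n - d < k)%N -> sigma W k = 0 /\ Qmx W k = 0.
Proof.
move=> dk; have nok f : kforest W k f = false.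
  apply/negP => /andP [ff /eqP nk]; have := narcs_leq_dim ff.
  by rewrite nk leqNgt dk.
split; first by rewrite sigma_sigmaf /sigmaf big_pred0.
by apply/matrixP => i j; rewrite Qmx_Qf /Qf big_pred0 ?mxE // => f; rewrite nok.
Qed.

Lemma mxtrace_Qmx k : \tr (Qmx W k) = (n - k)%:R * sigma W k.
Proof.
rewrite /mxtrace (eq_bigr _ (fun i _ => Qmx_Qf k i i)) sum_Qf_diag card_ord.
by rewrite sigma_sigmaf.
Qed.

End InForests.

(** * Idempotent matrices and the forest recurrence *)

Lemma big_ord_ltn (R : Type) (idx : R) (op : Monoid.com_law idx) n r (a b : R) :
  (r <= n)%N -> \big[op/idx]_(i < n) (if (i < r)%N then a else b)
              = op (\big[op/idx]_(i < r) a) (\big[op/idx]_(i < n - r) b).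
Proof.
move=> rn; rewrite -(big_mkord xpredT (fun i => if (i < r)%N then a else b)).
rewrite (big_cat_nat (leq0n r) rn) /=.
have := @big_addn R idx op 0 n r xpredT (fun i => if (i < r)%N then a else b).
rewrite add0n => ->; rewrite !big_mkord; congr (op _ _); apply: eq_bigr => i _.
  by rewrite ltn_ord.
by rewrite ltnNge leq_addl.
Qed.

Lemma char_poly_conj (F : fieldType) n (A U : 'M[F]_n) : U \in unitmx ->
  char_poly (U *m A *m invmx U) = char_poly A.
Proof.
move=> Uu; rewrite /char_poly /char_poly_mx.
set Up := map_mx polyC U; set Vp := map_mx polyC (invmx U).
have UV : Up *m Vp = 1%:M by rewrite -map_mxM mulmxV // map_mx1.
have -> : 'X%:M - map_mx polyC (U *m A *m invmx U)
   = Up *m ('X%:M - map_mx polyC A) *m Vp.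
  by rewrite !map_mxM mulmxBr mulmxBl mul_mx_scalar -scalemxAl UV scalemx1.
by rewrite det_mulmx det_mulmx mulrAC -det_mulmx UV det1 mul1r.
Qed.

Section Idempotent.
Variables (F : fieldType) (n : nat) (A : 'M[F]_n).
Hypothesis AA : A *m A = A.
Local Notation r := (\rank A).

(* With [A = L D U] the Gaussian elimination of [A], [A A = A] forces the
   top-left [r x r] block of [U L] to be the identity. *)
Lemma idem_conj_trig : exists2 U : 'M[F]_n, U \in unitmx &
  let B := U *m A *m invmx U in
  is_trig_mx B /\ forall i, B i i = if (i < r)%N then 1 else 0.
Proof.
have eb := mulmx_ebase A.
set L := col_ebase A in eb; set U := row_ebase A in eb.
have Lu : L \in unitmx by apply: col_ebase_unit.
have Uu : U \in unitmx by apply: row_ebase_unit.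
set D : 'M[F]_n := pid_mx r in eb.
set M := U *m L.
have DMD : D *m M *m D = D.
  apply: (can_inj (mulKmx Lu)); apply: (can_inj (mulmxK Uu)).
  by rewrite /M !mulmxA eb -[in RHS]AA -eb !mulmxA.
have conjA : U *m A *m invmx U = M *m D by rewrite -eb /M !mulmxA mulmxK.
exists U => //; rewrite /= conjA.
have Dij (i j : 'I_n) : D i j = ((i == j :> nat) && (i < r)%N)%:R.
  by rewrite /D /pid_mx mxE.
have MDij (i j : 'I_n) : (M *m D) i j = M i j * (j < r)%N%:R.
  rewrite mxE (bigD1 j) //= big1 ?addr0; first by rewrite Dij eqxx.
  by move=> k /negbTE kj; rewrite Dij (inj_eq val_inj) kj mulr0.
have Mij (i j : 'I_n) : (i < r)%N -> (j < r)%N -> M i j = (i == j)%:R.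
  move=> ir jr; have := congr1 (fun B : 'M[F]_n => B i j) DMD.
  rewrite -mulmxA mxE (bigD1 i) //= big1 ?addr0.
    by rewrite MDij jr mulr1 Dij eqxx ir mul1r Dij ir andbT => ->.
  by move=> k /negbTE ki; rewrite Dij (inj_eq val_inj) eq_sym ki mul0r.
split.
  apply/is_trig_mxP => i j ij; rewrite MDij.
  case jr: (j < r)%N; last by rewrite mulr0.
  by rewrite Mij ?(ltn_trans ij) // -(inj_eq val_inj) /= (ltn_eqF ij) mul0r.
by move=> i; rewrite MDij; case: ifP => ir; rewrite ?mulr0 // Mij // eqxx mulr1.
Qed.
Lemma mxtrace_idem : \tr A = r%:R.
Proof.
have [U Uu [_ diagB]] := idem_conj_trig.
rewrite -{1}(mulKmx Uu A) mxtrace_mulC /mxtrace (eq_bigr _ (fun i _ => diagB i)).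
by rewrite big_ord_ltn ?rank_leq_row // /= !sumr_const !card_ord mul0rn addr0.
Qed.

Lemma char_poly_idem : char_poly A = ('X - 1%:P) ^+ r * ('X - 0%:P) ^+ (n - r).
Proof.
have [U Uu [trigB diagB]] := idem_conj_trig.
rewrite -(char_poly_conj A Uu) char_poly_trig //.
rewrite (eq_bigr (fun i : 'I_n => if (i < r)%N then 'X - 1%:P else 'X - 0%:P)).
  by rewrite big_ord_ltn ?rank_leq_row // !prodr_const !card_ord.
by move=> i _; rewrite diagB; case: ifP.
Qed.

Lemma mup1_char_poly_idem : mup 1 (char_poly A) = r.
Proof.
rewrite char_poly_idem mupM ?expf_neq0 ?polyXsubC_eq0 // !mup_XsubCX.
by rewrite eqxx eq_sym oner_eq0 addn0.
Qed.

Lemma mup0_char_poly_idem : mup 0 (char_poly A) = (n - r)%N.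
Proof.
rewrite char_poly_idem mupM ?expf_neq0 ?polyXsubC_eq0 // !mup_XsubCX.
by rewrite eqxx oner_eq0.
Qed.

End Idempotent.

Section ForestRecurrence.
Variables (R : comUnitRingType) (n N : nat) (L : 'M[R]_n) (Q : nat -> 'M[R]_n) (s : nat -> R).
Hypotheses (Q0 : Q 0 = 1%:M) (s0 : s 0 = 1).
Hypothesis LQ : forall k, L *m Q k = s k.+1 *: 1%:M - Q k.+1.
Hypotheses (QN1 : Q N.+1 = 0) (sN1 : s N.+1 = 0).

Lemma Q_succ k : Q k.+1 = s k.+1 *: 1%:M - L *m Q k.
Proof. by rewrite LQ opprB addrC subrK. Qed.

Lemma mulmx_LQC k : L *m Q k = Q k *m L.
Proof.
elim: k => [|k IH]; first by rewrite Q0 mul1mx mulmx1.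
by rewrite Q_succ mulmxBr mulmxBl -scalemxAr -scalemxAl mulmx1 mul1mx -mulmxA -IH.
Qed.

Lemma mulmx_LQN : L *m Q N = 0.
Proof. by rewrite LQ QN1 sN1 scale0r subr0. Qed.

Lemma mulmx_QNL : Q N *m L = 0.
Proof. by rewrite -mulmx_LQC mulmx_LQN. Qed.

Lemma mulmx_QNQ k : Q N *m Q k = s k *: Q N.
Proof.
case: k => [|k]; first by rewrite Q0 mulmx1 s0 scale1r.
by rewrite Q_succ mulmxBr -scalemxAr mulmx1 mulmxA mulmx_QNL mul0mx subr0.
Qed.

Lemma mulmx_QQN k : Q k *m Q N = s k *: Q N.
Proof.
elim: k => [|k IH]; first by rewrite Q0 mul1mx s0 scale1r.
by rewrite Q_succ mulmxBl -scalemxAl mul1mx -mulmxA IH -scalemxAr mulmx_LQN scaler0 subr0.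
Qed.

Lemma normalized_mulmx_QN k : s k \is a GRing.unit -> s N \is a GRing.unit ->
  let J j := (s j)^-1 *: Q j in J N *m J k = J N /\ J k *m J N = J N.
Proof.
move=> sk sN J; rewrite /J -!scalemxAl -!scalemxAr mulmx_QNQ mulmx_QQN !scalerA.
by rewrite mulrVK // mulrAC mulVr // mul1r.
Qed.

End ForestRecurrence.

Theorem proposition9 (R : realFieldType) (n : nat) (W : 'M[R]_n)
  (hn : (1 < n)%N)
  (hloop : forall i, W i i = 0)
  (hpos : forall i j, 0 <= W i j) :
  let L := laplacian W in
  let d := inforest_dim W in
  let Jt := Jmx W (n - d) in
  let Qt := Qmx W (n - d) in
  [/\ L *m Jt = 0 /\ Jt *m L = 0 /\ L *m Qt = 0 /\ Qt *m L = 0,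
      (forall k, (k <= n - d)%N -> Jt *m Jmx W k = Jt /\ Jmx W k *m Jt = Jt),
      Jt *m Jt = Jt &
      [/\ \rank Jt = d, eigmult 1 Jt = d, \tr Jt = d%:R & eigmult 0 Jt = (n - d)%N]].
Proof.
move=> L d Jt Qt.
have [sN1 QN1] := sigma_Qmx_eq0 hloop (ltnSn (n - d)).
have rec := laplacian_Qmx hloop hpos.
have LQt := mulmx_LQN rec QN1 sN1; have QtL := mulmx_QNL (Qmx0 hloop) rec QN1 sN1.
have sigma_neq0 k : (k <= n - d)%N -> sigma W k != 0.
  by move=> kd; rewrite gt_eqF ?sigma_gt0.
have JJ k : (k <= n - d)%N -> Jt *m Jmx W k = Jt /\ Jmx W k *m Jt = Jt.
  move=> kd; apply: (normalized_mulmx_QN (Qmx0 hloop) (sigma0 hloop) rec QN1 sN1);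
  by rewrite unitfE sigma_neq0.
have idem : Jt *m Jt = Jt by case: (JJ _ (leqnn _)).
have trJ : \tr Jt = d%:R.
  rewrite mxtraceZ mxtrace_Qmx // (subKn (inforest_dim_leq W)) mulrCA.
  by rewrite mulVf ?mulr1 ?sigma_neq0.
have rkJ : \rank Jt = d by apply/eqP; rewrite -(eqr_nat R) -mxtrace_idem // trJ.
split => //.
- by rewrite /Jt /Jmx -scalemxAr -scalemxAl LQt QtL !scaler0.
- by rewrite /eigmult mup1_char_poly_idem ?mup0_char_poly_idem // rkJ.
Qed.
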